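(* For any finite nonempty sets $X,Y,Z,W \subseteq \mathbb{Z}$, \[ |X+Y| \;\le\; \frac{|X+Z|\cdot|Z+W|\cdot|W+Y|}{|Z|\cdot|W|}. \]
   Context: For sets $P,Q\subseteq\mathbb{Z}$, $P+Q=\{p+q : p\in P,\ q\in Q\}$. *)

From HB Require Import structures.
From mathcomp Require Import all_boot all_order all_algebra.
From mathcomp Require Import finmap.
Set Implicit Arguments. Unset Strict Implicit. Unset Printing Implicit Defensive.
Import Order.TTheory GRing.Theory Num.Theory.
Local Open Scope fset_scope.

Definition sumset (P Q : {fset int}) : {fset int} :=
  [fset (p + q)%R | p in P, q in Q].

From HB Require Import structures.
From mathcomp Require Import all_boot all_order all_algebra.
From mathcomp Require Import finmap.
Import Order.TTheory GRing.Theory Num.Theory.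
Local Open Scope fset_scope.

(* Proof: fix, for every s in X + Y, one representation s = x_s + y_s with
   x_s in X and y_s in Y.  The map
     (s, z, w) |-> (x_s + z, z + w, w + y_s)
   from (X + Y) x Z x W to (X + Z) x (Z + W) x (W + Y) is injective: the
   alternating sum of the three coordinates gives back x_s + y_s = s, after
   which the first coordinate determines z and the second one w. *)

Section Sumset.

Variable G : zmodType.
Local Open Scope ring_scope.

Definition addset (P Q : {fset G}) : {fset G} := [fset p + q | p in P, q in Q].

Lemma mem_addset {P Q : {fset G}} {p q} : p \in P -> q \in Q -> p + q \in addset P Q.
Proof. by move=> pP qQ; apply/imfset2P; exists p => //; exists q. Qed.

Lemma addset_split {P Q : {fset G}} (s : addset P Q) :
  exists p, (p \in P) && (val s - p \in Q).
Proof.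
case/imfset2P: (valP s) => p pP [q qQ ->].
by exists p; rewrite pP addrC addKr.
Qed.

Definition first_summand {P Q : {fset G}} (s : addset P Q) : G :=
  xchoose (addset_split s).

Lemma first_summandP {P Q : {fset G}} (s : addset P Q) :
  first_summand s \in P /\ val s - first_summand s \in Q.
Proof. exact/andP/(xchooseP (addset_split s)). Qed.

Lemma triangle_recover (s x z w : G) : (x + z) - (z + w) + (w + (s - x)) = s.
Proof. by rewrite addrKA addrA subrK subrKC. Qed.

Section Triangle.

Variables X Y Z W : {fset G}.

Definition triangle_map (t : addset X Y * Z * W) :
    addset X Z * addset Z W * addset W Y :=
  let: (s, z, w) := t in
  ([` mem_addset (proj1 (first_summandP s)) (valP z)],
   [` mem_addset (valP z) (valP w)],
   [` mem_addset (valP w) (proj2 (first_summandP s))]).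

(* The triangle map is injective: s is recovered by [triangle_recover], then z and w. *)
Lemma triangle_map_inj : injective triangle_map.
Proof.
move=> [[s z] w] [[s' z'] w'] /= [] exz ezw ewy.
have es : s = s'.
  apply: val_inj.
  by rewrite -(triangle_recover (val s) (first_summand s) (val z) (val w)) exz ezw ewy
       triangle_recover.
subst s'.
have ez : z = z' by apply: val_inj; exact: addrI exz.
subst z'.
by congr (_, _, _); apply: val_inj; exact: addrI ezw.
Qed.

Lemma card_addset_triangle :
  (#|` addset X Y| * #|` Z| * #|` W| <=
   #|` addset X Z| * #|` addset Z W| * #|` addset W Y|)%N.
Proof. by have := leq_card _ triangle_map_inj; rewrite !card_prod -!cardfE. Qed.

End Triangle.

End Sumset.

Theorem mainTheorem1 (X Y Z W : {fset int}) :
  X != fset0 -> Y != fset0 -> Z != fset0 -> W != fset0 ->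
  ((#|` sumset X Y|)%:R <=
     ((#|` sumset X Z|)%:R * (#|` sumset Z W|)%:R * (#|` sumset W Y|)%:R)
     / ((#|` Z|)%:R * (#|` W|)%:R) :> rat)%R.
Proof.
move=> _ _ Z0 W0.
have ZW_gt0 : (0 < #|` Z| * #|` W|)%N by rewrite muln_gt0 !lt0n !cardfs_eq0 Z0 W0.
rewrite ler_pdivlMr; last by rewrite -natrM ltr0n.
by rewrite -!natrM ler_nat mulnA; exact: card_addset_triangle.
Qed.
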